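(* The continuum $|\mathbb G|$ is one-dimensional.
   Context: A graph is a pair $A=(V(A),E(A))$ with $E(A)$ reflexive and symmetric; a topological graph additionally has $V$ compact, second countable, zero-dimensional and $E$ closed. Epimorphisms are (continuous) edge-preserving maps surjective on vertices and edges. A vertex set $S$ is disconnected if it splits into two nonempty closed subsets with no edges between them; otherwise connected; components are maximal connected subsets. An epimorphism $f\colon A\to B$ is confluent if for every connected $Q\subseteq V(B)$ each component $C$ of $f^{-1}(Q)$ satisfies $f(C)=Q$. $\mathcal G$ is the class of finite connected graphs with confluent epimorphisms, and $\mathbb G$ is its projective Fraïssé limit: the unique topological graph such that (1) every $A\in\mathcal G$ is a confluent epimorphic image of $\mathbb G$; (2) for $A,B\in\mathcal G$ and confluent epimorphisms $f\colon\mathbb G\to A$, $g\colon B\to A$ there is a confluent epimorphism $h\colon\mathbb G\to B$ with $f=g\circ h$; (3) for each $\varepsilon>0$ some confluent epimorphism from $\mathbb G$ onto a member of $\mathcal G$ has all point-preimages of diameter $<\varepsilon$. The edge relation of $\mathbb G$ is an equivalence relation and $|\mathbb G|=V(\mathbb G)/E(\mathbb G)$ is its topological realization. *)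

From HB Require Import structures.
From mathcomp Require Import all_boot all_order all_algebra.
From mathcomp Require Import all_classical all_reals all_analysis.
Set Implicit Arguments. Unset Strict Implicit. Unset Printing Implicit Defensive.
Import Order.TTheory GRing.Theory Num.Theory.
Local Open Scope classical_set_scope.
Local Open Scope ring_scope.

Section GraphConnectedness.
Variables (X : Type) (e : X -> X -> Prop) (cl : set X -> Prop).

Definition rel_closed (S P : set X) := exists F, cl F /\ P = S `&` F.

Definition gdisconnected (S : set X) :=
  exists P Q : set X, [/\ P !=set0 /\ Q !=set0, rel_closed S P, rel_closed S Q,
    P `|` Q = S & forall x y, P x -> Q y -> ~ e x y].

Definition gconnected (S : set X) := ~ gdisconnected S.

Definition gcomponent (S C : set X) :=
  [/\ C `<=` S, gconnected C &
      forall D, C `<=` D -> D `<=` S -> gconnected D -> D = C].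
End GraphConnectedness.

Definition conf_epi (X Y : Type) (eX : X -> X -> Prop) (clX : set X -> Prop)
    (eY : Y -> Y -> Prop) (clY : set Y -> Prop) (f : X -> Y) :=
  [/\ (forall x y, eX x y -> eY (f x) (f y)),
      (forall b, exists a, f a = b),
      (forall a b, eY a b -> exists x y, [/\ eX x y, f x = a & f y = b]) &
      (forall Q : set Y, gconnected eY clY Q ->
         forall C, gcomponent eX clX (f @^-1` Q) C -> f @` C = Q)].

(** Finite graphs carry the discrete topology: every set is closed. *)
Definition all_closed (T : Type) : set T -> Prop := fun _ => True.

Definition fin_conn_graph (T : finType) (eA : rel T) :=
  [/\ 0 < #|T|, reflexive eA, symmetric eA &
      gconnected (fun a b => eA a b) (@all_closed T) setT]%N.

Definition fconf_epi (B A : finType) (eB : rel B) (eA : rel A) (g : B -> A) :=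
  conf_epi (fun x y => eB x y) (@all_closed B) (fun a b => eA a b)
    (@all_closed A) g.

Section TopGraph.
Variables (R : realType) (V : pseudoMetricType R) (E : V -> V -> Prop).

Definition topgraph :=
  [/\ compact [set: V] /\ @second_countable V, zero_dimensional V,
      closed [set p : V * V | E p.1 p.2],
      (forall x, E x x) & (forall x y, E x y -> E y x)].

(** Continuous confluent epimorphism from (V, E) onto a finite graph
    (continuity into the discrete finite space = every fibre is open). *)
Definition tconf_epi (A : finType) (eA : rel A) (f : V -> A) :=
  (forall a, open (f @^-1` [set a])) /\
  conf_epi E (@closed V) (fun a b => eA a b) (@all_closed A) f.

Definition fraisse1 :=
  forall (A : finType) (eA : rel A), fin_conn_graph eA ->
    exists f : V -> A, tconf_epi eA f.

Definition fraisse2 :=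
  forall (A B : finType) (eA : rel A) (eB : rel B),
    fin_conn_graph eA -> fin_conn_graph eB ->
    forall (f : V -> A) (g : B -> A), tconf_epi eA f -> fconf_epi eB eA g ->
      exists h : V -> B, tconf_epi eB h /\ f = g \o h.

Definition fraisse3 :=
  forall eps : R, 0 < eps ->
    exists (A : finType) (eA : rel A) (f : V -> A),
      [/\ fin_conn_graph eA, tconf_epi eA f &
        forall a, exists2 d : R, d < eps &
          forall x y, f x = a -> f y = a -> ball x d y].

(** Topological realization |V| = V / E: points are the E-classes, a set of
    classes is open iff its union is open in V (quotient topology). *)
Definition realization := {C : set V | exists x, C = E x}.

Definition realization_open (U : set realization) :=
  open [set x : V | exists C : realization, U C /\ (sval C) x].
End TopGraph.

(** Covering (Cech-Lebesgue) dimension <= n of a space given by its open sets: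
    every finite open cover has a finite open refinement of order <= n+1. *)
Definition covdim_le (X : Type) (opn : set X -> Prop) (n : nat) :=
  forall (k : nat) (U : 'I_k -> set X), (forall i, opn (U i)) ->
    (forall x, exists i, U i x) ->
    exists (m : nat) (W : 'I_m -> set X),
      [/\ (forall j, opn (W j)), (forall x, exists j, W j x),
          (forall j, exists i, W j `<=` U i) &
          (forall x (S : {set 'I_m}), (forall j, j \in S -> W j x) ->
             (#|S| <= n.+1)%N)].

Definition one_dimensional (X : Type) (opn : set X -> Prop) :=
  covdim_le opn 1 /\ ~ covdim_le opn 0.

From HB Require Import structures.
From mathcomp Require Import all_boot all_order all_algebra.
From mathcomp Require Import all_classical all_reals all_analysis.
From mathcomp Require Import lra.
Set Implicit Arguments. Unset Strict Implicit. Unset Printing Implicit Defensive.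
Import Order.TTheory GRing.Theory Num.Theory.
Local Open Scope classical_set_scope.

(* Fine confluent maps onto finite graphs can be lifted through the double
   subdivision of the target, in which every edge [ab] becomes a path
   [a - ab - ba - b].  This shows that the edge relation [E] is transitive,
   so that [|G|] is the space of [E]-classes.  Given a finite open
   cover of [|G|], take a map [f] finer than a Lebesgue number for the edges
   and lift it to [h]; the classes on which [h] stays in one vertex fibre or
   in one subdivided edge [{ab, ba}] give a refinement of order 2, since
   [h] maps each class onto a clique.  Conversely, a map onto the path
   [a - c - b] yields a two-set cover of [|G|]; a disjoint refinement would
   split [G] into two nonempty open [E]-saturated parts, which a fine map onto
   a connected finite graph forbids. *)

Lemma gconnected_star (T : Type) (e : T -> T -> Prop) (cl : set T -> Prop)
    (S : set T) c :
  (forall x y, e x y -> e y x) -> S c -> (forall y, S y -> e c y) ->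
  gconnected e cl S.
Proof.
move=> e_sym Sc ecS [P [Q [[[p Pp] [q Qq]] _ _ PQ noE]]].
have : (P `|` Q) c by rewrite PQ.
case=> [Pc|Qc]; first by apply: (noE c q Pc Qq); apply: ecS; rewrite -PQ; right.
by apply: (noE p c Pp Qc); apply: e_sym; apply: ecS; rewrite -PQ; left.
Qed.

Section Collapse.
Variables (A B : Type) (eA : A -> A -> Prop) (eB : B -> B -> Prop).
Variables (g : B -> A) (s : A -> B).
Hypotheses (eB_sym : forall x y, eB x y -> eB y x) (sK : cancel s g).
Hypothesis eB_sg : forall w, eB (s (g w)) w.
Hypothesis g_lift :
  forall a b, eA a b -> exists x y, [/\ eB x y, g x = a & g y = b].

(* The fibre [g^-1 a] lies on the side of [s a], to which all of it is
   adjacent. *)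
Lemma fibre_side (Q : set A) (X Y : set B) :
    (forall x y, X x -> Y y -> ~ eB x y) -> X `|` Y = g @^-1` Q ->
  forall w w', g w = g w' -> X w -> X w'.
Proof.
move=> noXY XY w w' gww' Xw.
have XYg z : Q (g z) -> (X `|` Y) z by rewrite XY.
have : (X `|` Y) w by left.
rewrite XY => Qw.
have Xs : X (s (g w)).
  have /XYg[//|Ys] : Q (g (s (g w))) by rewrite sK.
  by case: (noXY _ _ Xw Ys (eB_sym (eB_sg w))).
have /XYg[//|Yw'] : Q (g w') by rewrite -gww'.
by case: (noXY _ _ Xs Yw'); rewrite gww'.
Qed.

Lemma gconnected_preimage Q : gconnected eA (@all_closed A) Q ->
  gconnected eB (@all_closed B) (g @^-1` Q).
Proof.
move=> conQ [P [P' [[[p Pp] [p' P'p']] _ _ PP' noE]]]; apply: conQ.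
have noE' x y : P' x -> P y -> ~ eB x y by move=> P'x Py /eB_sym; exact: noE.
have P'P : P' `|` P = g @^-1` Q by rewrite setUC.
have imQ X : X `<=` g @^-1` Q -> g @` X `<=` Q by move=> XQ _ [w /XQ Qw <-].
have PQ : P `<=` g @^-1` Q by rewrite -PP'; left.
have P'Q : P' `<=` g @^-1` Q by rewrite -PP'; right.
exists (g @` P), (g @` P'); split.
- by split; [exists (g p), p | exists (g p'), p'].
- by exists (g @` P); rewrite setIidr //; exact: imQ.
- by exists (g @` P'); rewrite setIidr //; exact: imQ.
- apply/seteqP; split=> [|a Qa]; first by rewrite subUset; split; exact: imQ.
  have : (P `|` P') (s a) by rewrite PP' /= sK.
  by case=> ?; [left|right]; exists (s a); rewrite ?sK.
- move=> _ _ [u Pu <-] [v P'v <-] /g_lift [x [y [exy gx gy]]].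
  apply: (noE x y) exy.
  + exact: fibre_side noE PP' u x (esym gx) Pu.
  + exact: fibre_side noE' P'P v y (esym gy) P'v.
Qed.

Lemma conf_epi_collapse : (forall x y, eB x y -> eA (g x) (g y)) ->
  conf_epi eB (@all_closed B) eA (@all_closed A) g.
Proof.
move=> g_edge; split=> // [a|Q conQ C [CQ _ maxC]]; first by exists (s a).
rewrite -(maxC _ CQ (fun _ => id) (gconnected_preimage conQ)).
apply/seteqP; split=> [_ [w Qw <-] //|a Qa].
by exists (s a); rewrite /= sK.
Qed.
End Collapse.

Lemma collapse_fconf_epi (A B : finType) (eA : rel A) (eB : rel B)
    (g : B -> A) (s : A -> B) :
  reflexive eB -> symmetric eB -> cancel s g -> (forall w, eB (s (g w)) w) ->
  (forall a b, eA a b -> exists x y, [/\ eB x y, g x = a & g y = b]) ->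
  (forall x y, eB x y -> eA (g x) (g y)) ->
  fin_conn_graph eA -> fin_conn_graph eB /\ fconf_epi eB eA g.
Proof.
move=> eB_refl eB_sym sK eB_sg g_lift g_edge [A0 _ _ conA].
have eB_symP x y : eB x y -> eB y x by rewrite eB_sym.
split; last exact: conf_epi_collapse.
split=> //; first by case/card_gt0P: A0 => a _; apply/card_gt0P; exists (s a).
rewrite -(preimage_setT g).
exact: (gconnected_preimage eB_symP sK eB_sg g_lift).
Qed.

Section DoubleSubdivision.
Variables (A : finType) (eA : rel A).

(* [inl a] is the vertex [a]; an edge [ab] of [A] becomes the path
   [a - inr (a, b) - inr (b, a) - b]. *)
Definition subdiv2 (u v : A + A * A) : bool :=
  match u, v with
  | inl a, inl a' => a == a'
  | inl a, inr p | inr p, inl a => p.1 == a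
  | inr p, inr q => (p == q) || [&& p.1 == q.2, p.2 == q.1 & eA p.1 p.2]
  end.

Definition subdiv2_proj (u : A + A * A) : A :=
  match u with inl a => a | inr p => p.1 end.

Lemma subdiv2_refl : reflexive subdiv2.
Proof. by case=> [a|p] /=; rewrite eqxx. Qed.

Lemma subdiv2_sym : symmetric eA -> symmetric subdiv2.
Proof.
move=> eA_sym [a|[p1 p2]] [a'|[q1 q2]] //=; try by rewrite eq_sym.
rewrite [(q1, q2) == _]eq_sym; congr (_ || _).
by apply/and3P/and3P => -[/eqP-> /eqP-> e]; rewrite !eqxx eA_sym.
Qed.

Lemma subdiv2_inl_proj w : subdiv2 (inl (subdiv2_proj w)) w.
Proof. by case: w => [a|p] /=; rewrite eqxx. Qed.

Lemma subdiv2_lift a b : eA a b ->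
  exists x y, [/\ subdiv2 x y, subdiv2_proj x = a & subdiv2_proj y = b].
Proof.
by move=> eab; exists (inr (a, b)), (inr (b, a)); rewrite /= !eqxx eab orbT.
Qed.

Lemma subdiv2_proj_edge : reflexive eA ->
  forall u v, subdiv2 u v -> eA (subdiv2_proj u) (subdiv2_proj v).
Proof.
move=> eA_refl [a|[p1 p2]] [a'|[q1 q2]] /=; try by move/eqP->.
by case/orP=> [/eqP[-> _]|/and3P[/eqP-> /eqP-> e]].
Qed.

Lemma subdiv2_fconf : fin_conn_graph eA ->
  fin_conn_graph subdiv2 /\ fconf_epi subdiv2 eA subdiv2_proj.
Proof.
move=> conA; have [_ eA_refl eA_sym _] := conA.
apply: (collapse_fconf_epi (s := inl)) => //.
- exact: subdiv2_refl.
- exact: subdiv2_sym.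
- exact: subdiv2_inl_proj.
- exact: subdiv2_lift.
- exact: subdiv2_proj_edge.
Qed.

Lemma subdiv2_edge_proj u v : subdiv2 u v ->
  subdiv2_proj u = subdiv2_proj v \/
  exists2 p, eA p.1 p.2 & u = inr p /\ v = inr (p.2, p.1).
Proof.
case: u v => [a|p] [a'|[q1 q2]] /=; try by move/eqP->; left.
case/orP=> [/eqP->|/and3P[/eqP e1 /eqP e2 e]]; first by left.
by right; exists p; rewrite // e1 e2.
Qed.

Lemma subdiv2_path_proj u v w : subdiv2 u v -> subdiv2 u w ->
    subdiv2_proj u != subdiv2_proj v -> subdiv2_proj u != subdiv2_proj w ->
  subdiv2_proj v = subdiv2_proj w.
Proof.
move=> /subdiv2_edge_proj[->|[p _ [-> ->]]]; first by rewrite eqxx.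
by move=> /subdiv2_edge_proj[->|[q _ [[->] ->]]]; first by rewrite eqxx.
Qed.

(* Each edge of [A] gets a single piece, indexed by its [enum_rank]-increasing
   orientation. *)
Definition subdiv2_piece (t : A + A * A) : set (A + A * A) :=
  match t with
  | inl a => [set u | subdiv2_proj u = a]
  | inr p => if (enum_rank p.1 < enum_rank p.2)%N && eA p.1 p.2
             then [set u | u = inr p \/ u = inr (p.2, p.1)] else set0
  end.

Lemma subdiv2_piece_edge : reflexive eA -> forall t, exists a b, eA a b /\
  forall u, subdiv2_piece t u -> subdiv2_proj u = a \/ subdiv2_proj u = b.
Proof.
move=> eA_refl [a|p] /=; first by exists a, a; split=> // u ->; left.
case: ifP => [/andP[_ ep]|_]; last by exists p.1, p.1.
by exists p.1, p.2; split=> // u [] ->; [left|right].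
Qed.

Lemma subdiv2_clique (K : set (A + A * A)) u0 : symmetric eA -> K u0 ->
  (forall u v, K u -> K v -> subdiv2 u v) -> exists t, K `<=` subdiv2_piece t.
Proof.
move=> eA_sym Ku0 adjK.
have [constK|] := pselect (forall u, K u -> subdiv2_proj u = subdiv2_proj u0).
  by exists (inl (subdiv2_proj u0)).
move=> /existsNP[v /not_implyP[Kv /eqP nv]].
have [e|[p ep [u0p vp]]] := subdiv2_edge_proj (adjK _ _ Ku0 Kv).
  by rewrite e eqxx in nv.
have Kp w : K w -> w = inr p \/ w = inr (p.2, p.1).
  move=> Kw; have [ew|[q _ [u0q ->]]] := subdiv2_edge_proj (adjK _ _ Ku0 Kw).
    have [ewv|[q _ [-> vq]]] := subdiv2_edge_proj (adjK _ _ Kw Kv).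
      by rewrite ew ewv eqxx in nv.
    left; move: vq; rewrite vp => -[e2 e1].
    by rewrite [q]surjective_pairing -e1 -e2 -surjective_pairing.
  by right; move: u0q; rewrite u0p => -[->].
have np : p.1 != p.2 by move: nv; rewrite u0p vp /= eq_sym.
case: (ltngtP (enum_rank p.1) (enum_rank p.2)) => [lt|gt|eq_rank].
- by exists (inr p); rewrite /= lt ep => w /Kp.
- exists (inr (p.2, p.1)); rewrite /= gt eA_sym ep /=.
  by move=> w /Kp[]->; [right; rewrite -surjective_pairing|left].
- by move: np; rewrite (enum_rank_inj (val_inj eq_rank)) eqxx.
Qed.

Lemma subdiv2_piece_card u (S : {set A + A * A}) :
  (forall t, t \in S -> subdiv2_piece t u) -> (#|S| <= 2)%N.
Proof.
pose orient (w : A + A * A) := match w with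
  | inl a => inl a
  | inr p => if (enum_rank p.1 < enum_rank p.2)%N then inr p else inr (p.2, p.1)
  end.
move=> Su; apply: (@leq_trans #|[set inl (subdiv2_proj u); orient u]%SET|).
  apply: subset_leq_card; apply/fintype.subsetP => t /Su; rewrite !inE.
  case: t => [a /= <-|p /=]; first by rewrite eqxx.
  case: ifP => // /andP[lt _] [] -> /=; first by rewrite lt.
  by rewrite ltnNge (ltnW lt) /= -surjective_pairing.
by rewrite cards2; case: eqP.
Qed.
End DoubleSubdivision.
Arguments subdiv2_proj {A} u.

Local Open Scope ring_scope.

Lemma open_setX (U V : topologicalType) (A : set U) (B : set V) :
  open A -> open B -> open (A `*` B).
Proof.
move=> oA oB; rewrite openE => -[x y] [Ax By].
by exists (A, B) => //=; split; apply: open_nbhs_nbhs.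
Qed.

Lemma open_preimage_fibres (T : topologicalType) (A : Type) (f : T -> A) :
  (forall a, open (f @^-1` [set a])) -> forall S, open (f @^-1` S).
Proof.
move=> f_open S; have -> : f @^-1` S = \bigcup_(a in S) f @^-1` [set a].
  by apply/seteqP; split=> [x Sx|x [a Sa /= ->] //]; exists (f x).
by apply: bigcup_open => a _; exact: f_open.
Qed.

Section PseudoMetric.
Variable R : realType.

Lemma compact_uniform_radius (T : pseudoMetricType R) (Q : T -> R -> Prop) :
  compact [set: T] ->
  (forall x, exists2 r, 0 < r &
     forall y d, ball x r y -> 0 < d -> d <= r -> Q y d) ->
  exists2 d, 0 < d & forall y, Q y d.
Proof.
move=> /compact_near_coveringP cpt locQ.
have : \forall d \near at_right (0 : R), [set: T] `<=` (fun y => Q y d).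
  apply: cpt => x _; have [r r0 Qr] := locQ x.
  exists (ball x r, [set d | 0 < d <= r]).
    split; first exact: nbhsx_ballx.
    exists r => //= d; rewrite /ball_ /= sub0r normrN => /ltr_normlW dr d0.
    by rewrite d0 ltW.
  by case=> y d /= [xy /andP[d0 dr]]; exact: Qr.
move=> nearQ.
have [d [Qd d0]] := @filter_ex _ _ (at_right_proper_filter 0) _
  (filterI nearQ (nbhs_right_gt (0 : R))).
by exists d => // y; exact: Qd.
Qed.

Lemma lebesgue_number (T : pseudoMetricType R) (I : Type) (O : I -> set T) :
  compact [set: T] -> (forall i, open (O i)) -> (forall x, exists i, O i x) ->
  exists2 d, 0 < d & forall x, exists i, ball x d `<=` O i.
Proof.
move=> cpt O_open O_cover.
apply: (compact_uniform_radius (Q := fun y d => exists i, ball y d `<=` O i)).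
  exact: cpt.
move=> x.
have [i Oix] := O_cover x.
have /nbhs_ballP[e e0 xeO] : nbhs x (O i) by apply: open_nbhs_nbhs.
exists (e / 2); first by rewrite divr_gt0.
move=> y d xy d0 de; exists i => z yz; apply: xeO.
by rewrite [e]splitr; apply: ball_triangle xy (le_ball de yz).
Qed.

Lemma edge_lebesgue_number (T : pseudoMetricType R) (E : T -> T -> Prop)
    (I : Type) (O : I -> set T) :
  compact [set: T] -> closed [set p : T * T | E p.1 p.2] ->
  (forall i, open (O i)) -> (forall x y, E x y -> exists i, O i x /\ O i y) ->
  exists2 d, 0 < d &
    forall x y, E x y -> exists i, ball x d `<=` O i /\ ball y d `<=` O i.
Proof.
move=> cpt E_closed O_open O_cover.
have cpt2 : compact [set: T * T] by rewrite -setXTT; exact: compact_setX.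
pose O2 (o : option I) :=
  if o is Some i then O i `*` O i else ~` [set p : T * T | E p.1 p.2].
have O2_open o : open (O2 o).
  by case: o => [i|]; [exact: open_setX | exact: closed_openC].
have O2_cover p : exists o, O2 o p.
  case: p => x y; have [Exy|nE] := pselect (E x y); last by exists None.
  by have [i Oi] := O_cover x y Exy; exists (Some i).
have [d d0 Od] := lebesgue_number cpt2 O2_open O2_cover.
exists d => // x y Exy; have [[i|] Oi] := Od (x, y).
  exists i; split=> z xz.
    by have [] := Oi (z, y) (conj xz (ballxx _ d0)).
  by have [] := Oi (x, z) (conj (ballxx _ d0) xz).
by case: (Oi (x, y) (conj (ballxx _ d0) (ballxx _ d0))).
Qed.

(* Tube lemma: the complement is the projection of the closed set
   [E `&` (T `*` ~` K)] along the compact second factor. *)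
Lemma open_saturated_interior (T : pseudoMetricType R) (E : T -> T -> Prop)
    (K : set T) :
  compact [set: T] -> closed [set p : T * T | E p.1 p.2] -> open K ->
  open [set x | forall y, E x y -> K y].
Proof.
move=> cpt E_closed K_open; rewrite openE => x xK; apply/nbhs_ballP.
have [y|d d0 Kd] := compact_uniform_radius (Q := fun y d => K y \/
   (forall x' y', ball x d x' -> ball y d y' -> ~ E x' y')) cpt; last first.
  exists d => // x' xx' y Exy; apply: contrapT => nKy.
  by case: (Kd y) => // /(_ x' y xx' (ballxx _ d0)).
have [Ky|nKy] := pselect (K y).
  have /nbhs_ballP[e e0 yeK] : nbhs y K by apply: open_nbhs_nbhs.
  exists (e / 2); first by rewrite divr_gt0.
  by move=> y1 d1 yy1 d10 d1e; left; apply: yeK; apply: le_ball yy1; lra.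
have : nbhs (x, y) (~` [set p : T * T | E p.1 p.2]).
  by apply: open_nbhs_nbhs; split; [exact: closed_openC | move/xK].
move=> /nbhs_ballP[e e0 xyE]; exists (e / 2); first by rewrite divr_gt0.
move=> y1 d1 yy1 d10 d1e; right => x' y' xx' y1y'.
apply: (xyE (x', y')); split=> /=.
  by apply: le_ball xx'; lra.
by rewrite [e]splitr; apply: ball_triangle yy1 (le_ball d1e y1y').
Qed.

Lemma zero_dimensional_ball (T : pseudoMetricType R) (x y : T) :
  zero_dimensional T -> x != y -> exists2 r : R, 0 < r & ~ ball x r y.
Proof.
move=> T0 /T0[U [[U_open _] Ux nUy]].
have /nbhs_ballP[r r0 xrU] : nbhs x U by apply: open_nbhs_nbhs.
by exists r => // /xrU.
Qed.

Lemma fine_map_ball (T : pseudoMetricType R) (A : Type) (f : T -> A) eps :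
  (forall a, exists2 d, d < eps & forall x y, f x = a -> f y = a -> ball x d y) ->
  forall x y, f x = f y -> ball x eps y.
Proof.
move=> f_fine x y fxy; have [d /ltW de xyd] := f_fine (f x).
exact: le_ball de _ (xyd _ _ erefl (esym fxy)).
Qed.

Lemma fine_edge_preimage (T : pseudoMetricType R) (E : T -> T -> Prop)
    (I : Type) (O : I -> set T) d (A : Type) (eA : A -> A -> Prop) (f : T -> A) :
  (forall x y, E x y -> exists i, ball x d `<=` O i /\ ball y d `<=` O i) ->
  (forall x y, f x = f y -> ball x d y) ->
  (forall a b, eA a b -> exists x y, [/\ E x y, f x = a & f y = b]) ->
  forall a b, eA a b -> exists i, forall z, f z = a \/ f z = b -> O i z.
Proof.
move=> Od f_fine f_lift a b /f_lift[x [y [Exy fx fy]]].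
have [i [xO yO]] := Od x y Exy.
by exists i => z [fz|fz]; [apply: xO | apply: yO]; apply: f_fine; congruence.
Qed.
End PseudoMetric.

Section Realization.
Variables (R : realType) (V : pseudoMetricType R) (E : V -> V -> Prop).
Hypotheses (E_refl : forall x, E x x) (E_sym : forall x y, E x y -> E y x).
Hypothesis E_trans : forall x y z, E x y -> E y z -> E x z.

Definition rclass (x : V) : realization E := exist _ (E x) (ex_intro _ x erefl).

Definition rpoints (U : set (realization E)) : set V :=
  [set x | exists C, U C /\ sval C x].

Lemma rclass_mem x : sval (rclass x) x.
Proof. exact: E_refl. Qed.

Lemma realization_nonempty (C : realization E) : exists x, sval C x.
Proof. by case: C => C [x Cx] /=; exists x; rewrite Cx. Qed.

Lemma realization_classE (C : realization E) x : sval C x -> sval C = E x.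
Proof.
case: C => C [w CE] /=; rewrite CE => Ewx; apply/funext => z; apply/propext.
by split=> [/(E_trans (E_sym Ewx))|/(E_trans Ewx)].
Qed.

Lemma realization_E (C : realization E) x y : sval C x -> sval C y -> E x y.
Proof. by move=> Cx; rewrite (realization_classE Cx). Qed.

Lemma rpointsP U (C : realization E) x : sval C x -> rpoints U x -> U C.
Proof.
move=> Cx [D [UD Dx]]; suff -> : C = D by [].
apply: eq_sig_hprop => [? ? ?|]; first exact: Prop_irrelevance.
by rewrite (realization_classE Cx) (realization_classE Dx).
Qed.

Lemma rpoints_saturated U x y : E x y -> rpoints U x -> rpoints U y.
Proof.
by move=> Exy [C [UC Cx]]; exists C; split; rewrite // (realization_classE Cx).
Qed.

Lemma realization_open_sub (K : set V) :
  compact [set: V] -> closed [set p : V * V | E p.1 p.2] -> open K ->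
  realization_open [set C : realization E | sval C `<=` K].
Proof.
move=> cpt E_closed K_open.
change (open (rpoints [set C : realization E | sval C `<=` K])).
suff -> : rpoints [set C | sval C `<=` K] = [set x | forall y, E x y -> K y].
  exact: open_saturated_interior.
apply/seteqP; split=> x /=.
  by case=> C [CK Cx] y; rewrite -(realization_classE Cx); exact: CK.
by move=> xK; exists (rclass x); split=> //; exact: rclass_mem.
Qed.

Lemma covdim0_saturated_split U0 U1 :
  covdim_le (@realization_open R V E) 0 ->
  realization_open U0 -> realization_open U1 -> (forall C, U0 C \/ U1 C) ->
  exists S : set V, [/\ open S, open (~` S),
    (forall x y, E x y -> S x -> S y), S `<=` rpoints U0 & ~` S `<=` rpoints U1].
Proof.
move=> dim0 U0_open U1_open U_cover.
pose U (i : 'I_2) := if i == ord0 then U0 else U1.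
have [|C|m [W [W_open W_cover W_ref W_ord]]] := dim0 2 U.
- by move=> i; rewrite /U; case: ifP.
- by case: (U_cover C) => ?; [exists ord0 | exists ord_max].
pose S1 := \bigcup_(j in [set j | W j `<=` U0]) rpoints (W j).
pose S2 := \bigcup_(j in [set j | ~ W j `<=` U0]) rpoints (W j).
have S12 : ~` S1 = S2.
  apply/seteqP; split=> x.
    have [j Wj] := W_cover (rclass x).
    have xWj : rpoints (W j) x.
      by exists (rclass x); split=> //; exact: rclass_mem.
    have [WU0 nS1x|nWU0 _] := pselect (W j `<=` U0); last by exists j.
    by case: nS1x; exists j.
  move=> [j2 nj2 xj2] [j1 j1U0 xj1].
  have j12 : j1 != j2 by apply: contraPneq nj2 => <-.
  suff : (#|[set j1; j2]%SET| <= 1)%N by rewrite cards2 j12.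
  apply: (W_ord (rclass x)) => j; rewrite !inE => /orP[]/eqP->;
    exact: rpointsP (rclass_mem x) _.
exists S1; split; rewrite ?S12.
- by apply: bigcup_open => j _; exact: W_open.
- by apply: bigcup_open => j _; exact: W_open.
- by move=> x y Exy [j Wj xj]; exists j => //; exact: rpoints_saturated xj.
- by move=> x [j WU0 [C [WC Cx]]]; exists C; split=> //; exact: WU0.
- move=> x [j nWU0 [C [WC Cx]]]; exists C; split=> //.
  have [i] := W_ref j; rewrite /U; case: ifP => _ WUi; last exact: WUi.
  by case: nWU0.
Qed.
End Realization.

Definition path3 (u v : option bool) : bool := [|| u == v, u == None | v == None].

Lemma path3_fin_conn_graph : fin_conn_graph path3.
Proof.
split=> //; first by apply/card_gt0P; exists None.
- by move=> u; rewrite /path3 eqxx.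
- by case=> [[]|] [[]|].
- apply: (@gconnected_star _ _ _ _ None) => //; first by case=> [[]|] [[]|].
  by move=> y _; rewrite /path3 eqxx orbT.
Qed.

Section FraisseLimit.
Variables (R : realType) (V : pseudoMetricType R) (E : V -> V -> Prop).
Hypotheses (tg : topgraph E) (F1 : fraisse1 E).
Hypotheses (F2 : fraisse2 E) (F3 : fraisse3 E).

Let V_compact : compact [set: V]. Proof. by case: tg => [[]]. Qed.
Let E_closed : closed [set p : V * V | E p.1 p.2]. Proof. by case: tg. Qed.
Let E_refl x : E x x. Proof. by case: tg. Qed.
Let E_sym x y : E x y -> E y x. Proof. by case: tg => _ _ _ _; apply. Qed.

Lemma fine_subdiv2_map (eps : R) : 0 < eps ->
  exists (A : finType) (eA : rel A) (f : V -> A) (h : V -> A + A * A),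
  [/\ fin_conn_graph eA, tconf_epi E eA f,
      (forall x y, f x = f y -> ball x eps y),
      tconf_epi E (subdiv2 eA) h & f = subdiv2_proj \o h].
Proof.
move=> eps0; have [A [eA [f [conA f_epi f_fine]]]] := F3 eps0.
have [conB g_epi] := subdiv2_fconf conA.
have [h [h_epi fh]] := F2 conA conB f_epi g_epi.
by exists A, eA, f, h; split=> //; exact: fine_map_ball.
Qed.

(* Were [x - y - z] a path of distinct points, a fine map [f] separating them
   would lift to the double subdivision with [h y] adjacent to [h x] and [h z];
   but an edge of the subdivision joining distinct fibres is a middle edge
   [inr (a, b) - inr (b, a)], which forces [f x = f z]. *)
Lemma fraisse_E_trans x y z : E x y -> E y z -> E x z.
Proof.
move=> Exy Eyz.
have [<-|nxz] := eqVneq x z; first exact: E_refl.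
have [exy|nxy] := eqVneq x y; first by rewrite exy.
have [eyz|nyz] := eqVneq y z; first by rewrite -eyz.
have [_ V0 _ _ _] := tg.
have [r1 r1_0 nb1] := zero_dimensional_ball V0 nxy.
have [r2 r2_0 nb2] := zero_dimensional_ball V0 nyz.
have [r3 r3_0 nb3] := zero_dimensional_ball V0 nxz.
pose r := Num.min r1 (Num.min r2 r3).
have r0 : 0 < r by rewrite !lt_min r1_0 r2_0 r3_0.
have [A [eA [f [h [_ _ f_fine [_ [h_edge _ _ _]] fh]]]]] := fine_subdiv2_map r0.
have f_sep u v r' : r <= r' -> ~ ball u r' v -> f u != f v.
  by move=> rr' nb; apply/eqP => /f_fine/(le_ball rr').
have [r_1 r_2 r_3] : [/\ r <= r1, r <= r2 & r <= r3].
  by rewrite /r !ge_min !lexx !orbT.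
have fP w : f w = subdiv2_proj (h w) by rewrite fh.
have fxz : f x = f z.
  rewrite !fP.
  apply: (subdiv2_path_proj (h_edge _ _ (E_sym Exy)) (h_edge _ _ Eyz)).
    by rewrite -!fP eq_sym; exact: f_sep r_1 nb1.
  by rewrite -!fP; exact: f_sep r_2 nb2.
by move: (f_sep _ _ _ r_3 nb3); rewrite fxz eqxx.
Qed.

Let E_trans : forall x y z, E x y -> E y z -> E x z := fraisse_E_trans.

Lemma saturated_clopen_trivial (S : set V) : open S -> open (~` S) ->
  (forall x y, E x y -> S x -> S y) -> S = set0 \/ S = setT.
Proof.
move=> S_open CS_open S_sat.
pose O (b : bool) := if b then S else ~` S.
have O_open b : open (O b) by case: b.
have O_cover x : exists b, O b x.
  by have [] := pselect (S x); [exists true | exists false].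
have [d d0 Sd] := lebesgue_number V_compact O_open O_cover.
have [A [eA [f [[_ _ _ conA] [_ [_ f_surj f_lift _]] f_fine]]]] := F3 d0.
have S_fibre x y : f x = f y -> S x -> S y.
  move=> fxy Sx; have [[] xdS] := Sd x; first exact/xdS/(fine_map_ball f_fine).
  by case: (xdS x (ballxx _ d0)).
have [->|/set0P[x Sx]] := eqVneq S set0; [by left | right].
apply/seteqP; split=> // y _; apply: contrapT => nSy; apply: conA.
exists (f @` S), (f @` ~` S); split.
- by split; [exists (f x), x | exists (f y), y].
- by exists (f @` S); rewrite setTI.
- by exists (f @` ~` S); rewrite setTI.
- apply/seteqP; split=> // a _; have [z <-] := f_surj a.
  by have [Sz|nSz] := pselect (S z); [left|right]; exists z.
- move=> _ _ [u Su <-] [v nSv <-] /f_lift[x' [y' [Exy fx' fy']]].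
  apply: nSv (S_fibre y' v _ (S_sat _ _ Exy (S_fibre u x' _ Su))); congruence.
Qed.

Lemma realization_covdim_le1 : covdim_le (@realization_open R V E) 1.
Proof.
move=> k U U_open U_cover.
have rU_cover x y : E x y -> exists i, rpoints (U i) x /\ rpoints (U i) y.
  move=> Exy; have [i Ui] := U_cover (rclass E x).
  by exists i; split; exists (rclass E x); split=> //; exact: rclass_mem.
have [d d0 Ud] := edge_lebesgue_number (O := fun i => rpoints (U i))
  V_compact E_closed U_open rU_cover.
have [A [eA [f [h [[_ eA_refl eA_sym _] [_ [_ _ f_lift _]] f_fine
  [h_open [h_edge _ _ _]] fh]]]]] := fine_subdiv2_map d0.
have fP w : f w = subdiv2_proj (h w) by rewrite fh.
pose W t := [set C : realization E | sval C `<=` h @^-1` subdiv2_piece eA t].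
exists #|{: A + A * A}|, (W \o enum_val); split.
- move=> j; apply: realization_open_sub => //; exact: open_preimage_fibres.
- move=> C; have [x Cx] := realization_nonempty E_refl C.
  have hC_clique u v : (h @` sval C) u -> (h @` sval C) v -> subdiv2 eA u v.
    move=> [y Cy <-] [z Cz <-].
    exact/h_edge/(realization_E E_sym E_trans Cy Cz).
  have [t Kt] := subdiv2_clique eA_sym (imageP h Cx) hC_clique.
  by exists (enum_rank t); rewrite /= enum_rankK => y Cy; apply: Kt; exists y.
- move=> j; have [a [b [eab ab]]] := subdiv2_piece_edge eA_refl (enum_val j).
  have [i abU] := fine_edge_preimage Ud f_fine f_lift eab.
  exists i => C WC; have [x Cx] := realization_nonempty E_refl C.
  by apply: (rpointsP E_sym E_trans Cx); apply: abU; rewrite fP; exact/ab/WC.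
- move=> C S WS; have [x Cx] := realization_nonempty E_refl C.
  rewrite -(card_imset _ enum_val_inj); apply: (subdiv2_piece_card (u := h x)).
  by move=> _ /imsetP[j Sj ->]; exact: WS.
Qed.

Lemma realization_not_covdim_le0 : ~ covdim_le (@realization_open R V E) 0.
Proof.
move=> dim0; have [f [f_open [f_edge f_surj _ _]]] := F1 path3_fin_conn_graph.
pose U b := [set C : realization E | sval C `<=` f @^-1` [set u | u != Some b]].
have U_open b : realization_open (U b).
  by apply: realization_open_sub => //; exact: open_preimage_fibres.
have U_cover C : U true C \/ U false C.
  have [[y [Cy fy]]|noF] := pselect (exists y, sval C y /\ f y = Some false).
    left=> z Cz; move: (f_edge _ _ (realization_E E_sym E_trans Cy Cz)).
    by rewrite fy /preimage /=; case: (f z) => [[]|].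
  by right=> z Cz; apply/eqP => fz; apply: noF; exists z.
have [S [S_open CS_open S_sat SU CSU]] :=
  covdim0_saturated_split E_refl E_sym E_trans dim0
    (U_open true) (U_open false) U_cover.
have notU b x : f x = Some b -> ~ rpoints (U b) x.
  by move=> fx [C [UC Cx]]; move: (UC x Cx); rewrite /preimage /= fx eqxx.
have [x fx] := f_surj (Some true); have [y fy] := f_surj (Some false).
have [S0|ST] := saturated_clopen_trivial S_open CS_open S_sat.
- by apply: notU fy (CSU y _); rewrite S0.
- by apply: notU fx (SU x _); rewrite ST.
Qed.
End FraisseLimit.

Theorem mainTheorem5 (R : realType) (V : pseudoMetricType R) (E : V -> V -> Prop) :
  topgraph E -> fraisse1 E -> fraisse2 E -> fraisse3 E ->
  one_dimensional (@realization_open R V E).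
Proof.
move=> tg F1 F2 F3; split.
- exact: realization_covdim_le1.
- exact: realization_not_covdim_le0.
Qed.
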